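(* Let $(P,\preceq)$ be a poset, $\mathcal{X}:=\{X\subseteq P\mid (X,\preceq)\text{ well-ordered}\}$, and $\Lambda$ a set. The $\Lambda$-system algebra of causal systems over $\mathcal{X}$ is a composition-order invariant functional $\Lambda$-system algebra over $\mathcal{X}$; in particular its set of systems is closed under parallel composition and interface connection.
   Context: $\mathcal{X}^{\mathcal{I}}$ is the set of functions $\mathcal{I}\to\mathcal{X}$; $\mathbin{\triangle}$ is symmetric difference; $x\prec y$ means $x\preceq y$, $x\ne y$. For finite disjoint $\mathcal{I},\mathcal{O}\subseteq\Lambda$, a causal $(\mathcal{I},\mathcal{O})$-system over $\mathcal{X}$ is a function $s:\mathcal{X}^{\mathcal{I}}\to\mathcal{X}^{\mathcal{O}}$ such that for all $\mathbf{X},\mathbf{X}'$, $o\in\mathcal{O}$, $y\in s(\mathbf{X})(o)\mathbin{\triangle}s(\mathbf{X}')(o)$ there exist $i\in\mathcal{I}$, $x\in\mathbf{X}(i)\mathbin{\triangle}\mathbf{X}'(i)$ with $x\prec y$. The $\Lambda$-system algebra of causal systems has as systems all causal $(\mathcal{I},\mathcal{O})$-systems for finite disjoint $\mathcal{I},\mathcal{O}\subseteq\Lambda$, with $\lambda(s)=\mathcal{I}\cup\mathcal{O}$, $\Gamma(s)=\{\{i,o\}\mid i\in\mathcal{I},o\in\mathcal{O}\}$, parallel composition $(s_1\parallel s_2)(\mathbf{X})(o_j)=s_j(\mathbf{X}|_{\mathcal{I}_j})(o_j)$ for $s_j$ with index sets $\mathcal{I}_j,\mathcal{O}_j$ ($j=1,2$,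 all four pairwise disjoint), and interface connection $\gamma_{i,o}(s)(\mathbf{X})=s(\mathbf{X}\cup\{(i,X^* )\})|_{\mathcal{O}\setminus\{o\}}$ for $\mathbf{X}\in\mathcal{X}^{\mathcal{I}\setminus\{i\}}$, where $X^*$ is the unique $X_i\in\mathcal{X}$ with $s(\mathbf{X}\cup\{(i,X_i)\})(o)=X_i$. Being a functional $\Lambda$-system algebra means that the set of systems is closed under $\parallel$ and $\gamma$ and $\{i,o\}\in\Gamma(s_1\parallel s_2)\iff\{i,o\}\in\Gamma(s_j)$ for $i,o\in\lambda(s_j)$ when $\lambda(s_1)\cap\lambda(s_2)=\emptyset$. Composition-order invariance means: (i) for all $s$, $\{i,o\}\in\Gamma(s)$, $\{i',o'\}\in\Gamma(\gamma_{i,o}(s))$: $\{i',o'\}\in\Gamma(s)$, $\{i,o\}\in\Gamma(\gamma_{i',o'}(s))$, and $\gamma_{i',o'}(\gamma_{i,o}(s))=\gamma_{i,o}(\gamma_{i',o'}(s))$; (ii) $\parallel$ is associative and commutative; (iii) $\gamma_{i,o}(s_1)\parallel s_2=\gamma_{i,o}(s_1\parallel s_2)$ whenever $\lambda(s_1)\cap\lambda(s_2)=\emptyset$ and $\{i,o\}\in\Gamma(s_1)$. *)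

From Stdlib Require Import List Classical ClassicalEpsilon
  FunctionalExtensionality PropExtensionality ProofIrrelevance.

Unset Implicit Arguments.

Section CausalSystems.

Variable P : Type.
Variable le : P -> P -> Prop.
Variable L : Type.

Definition plt (x y : P) : Prop := le x y /\ x <> y.

Definition well_ordered (X : P -> Prop) : Prop :=
  (forall x y, X x -> X y -> le x y \/ le y x) /\
  (forall A : P -> Prop, (forall a, A a -> X a) -> (exists a, A a) ->
     exists m, A m /\ forall a, A a -> le m a).

Definition WO : Type := { X : P -> Prop | well_ordered X }.

Definition symdiff (A B : P -> Prop) (y : P) : Prop :=
  (A y /\ ~ B y) \/ (B y /\ ~ A y).

Definition finite_set (I : L -> Prop) : Prop :=
  exists l : list L, forall x, I x -> In x l.

(* A (candidate) system: index sets I, O ⊆ Λ and a function 𝒳^I -> 𝒳^O,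
   where 𝒳^I is the type of functions from {l | I l} to 𝒳. *)
Record system : Type := Sys {
  sI : L -> Prop;
  sO : L -> Prop;
  sfun : ({ l | sI l } -> WO) -> ({ l | sO l } -> WO)
}.

Definition lab (s : system) (l : L) : Prop := sI s l \/ sO s l.

(* {a,b} ∈ Γ(s) = {{i,o} | i ∈ I, o ∈ O}  (unordered pair) *)
Definition InGamma (s : system) (a b : L) : Prop :=
  (sI s a /\ sO s b) \/ (sI s b /\ sO s a).

Definition causal (s : system) : Prop :=
  finite_set (sI s) /\ finite_set (sO s) /\
  (forall l, sI s l -> sO s l -> False) /\
  forall (X X' : { l | sI s l } -> WO) (o : { l | sO s l }) (y : P),
    symdiff (proj1_sig (sfun s X o)) (proj1_sig (sfun s X' o)) y ->
    exists (i : { l | sI s l }) (x : P),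
      symdiff (proj1_sig (X i)) (proj1_sig (X' i)) x /\ plt x y.

Definition lab_disjoint (s1 s2 : system) : Prop :=
  forall l, lab s1 l -> lab s2 l -> False.

Lemma or_resolve (A B : Prop) : A \/ B -> ~ A -> B.
Proof. intros [a|b] n; [contradiction|exact b]. Qed.

Definition par (s1 s2 : system) : system :=
  Sys (fun l => sI s1 l \/ sI s2 l) (fun l => sO s1 l \/ sO s2 l)
    (fun X o =>
       match excluded_middle_informative (sO s1 (proj1_sig o)) with
       | left h =>
           sfun s1 (fun l => X (exist _ (proj1_sig l) (or_introl (proj2_sig l))))
                (exist _ (proj1_sig o) h)
       | right h =>
           sfun s2 (fun l => X (exist _ (proj1_sig l) (or_intror (proj2_sig l))))
                (exist _ (proj1_sig o) (or_resolve _ _ (proj2_sig o) h))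
       end).

Lemma empty_wo : well_ordered (fun _ => False).
Proof.
  split.
  - intros x y [].
  - intros A HA [a Ha]. destruct (HA a Ha).
Qed.

Definition WO_inhabited : inhabited WO :=
  inhabits (exist _ (fun _ => False) empty_wo).

Definition extend (I : L -> Prop) (i : L)
    (X : { l | I l /\ l <> i } -> WO) (Xi : WO) : { l | I l } -> WO :=
  fun l =>
    match excluded_middle_informative (proj1_sig l = i) with
    | left _ => Xi
    | right h => X (exist _ (proj1_sig l) (conj (proj2_sig l) h))
    end.

Definition restrict (O : L -> Prop) (o : L)
    (Y : { l | O l } -> WO) : { l | O l /\ l <> o } -> WO :=
  fun l => Y (exist _ (proj1_sig l) (proj1 (proj2_sig l))).

Definition is_fix (s : system) (i o : L)
    (X : { l | sI s l /\ l <> i } -> WO) (Xi : WO) : Prop :=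
  forall h : sO s o, sfun s (extend (sI s) i X Xi) (exist _ o h) = Xi.

(* X* : the (unique, see the theorem) solution *)
Definition Xstar (s : system) (i o : L)
    (X : { l | sI s l /\ l <> i } -> WO) : WO :=
  epsilon WO_inhabited (is_fix s i o X).

Definition conn (s : system) (i o : L) : system :=
  Sys (fun l => sI s l /\ l <> i) (fun l => sO s l /\ l <> o)
    (fun X => restrict (sO s) o (sfun s (extend (sI s) i X (Xstar s i o X)))).

(* γ indexed by the unordered pair {a,b} ∈ Γ(s): the member of the pair
   lying in I is the connected input, the other one the output. *)
Definition gamma (s : system) (a b : L) : system :=
  match excluded_middle_informative (sI s a) with
  | left _ => conn s a b
  | right _ => conn s b a
  end.

End CausalSystems.
Arguments Sys {P le L} sI sO sfun.
Arguments sI {P le L} s _.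
Arguments sO {P le L} s _.
Arguments sfun {P le L} s _ _.
Arguments lab {P le L} s l.
Arguments InGamma {P le L} s a b.
Arguments causal {P le L} s.
Arguments lab_disjoint {P le L} s1 s2.
Arguments par {P le L} s1 s2.
Arguments is_fix {P le L} s i o X Xi.
Arguments gamma {P le L} s a b.
Arguments conn {P le L} s i o.
Arguments Xstar {P le L} s i o X.

(* Interface connection is well defined because, once the other inputs are fixed, the
   feedback map [Xi ↦ s(X ∪ {(i,Xi)})(o)] is causal, and a causal map on well-ordered sets
   has exactly one fixed point.  Uniqueness: the union of two well-ordered sets is well founded
   for ≺, and at a ≺-minimal point where two fixed points differ, causality produces an earlier
   difference.  Existence: the well-ordered sets that the map reproduces on their own
   down-closure form a chain; their union is again such a set and admits no extension, so it is
   a fixed point.  The same minimal-difference argument, run on all inputs at once, shows that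
   a connected system is causal and that two connections commute; the laws of parallel
   composition are bookkeeping on index sets. *)

From Stdlib Require Import List Classical ClassicalEpsilon
  FunctionalExtensionality PropExtensionality ProofIrrelevance.

Section CausalSystemAlgebra.

Variables (P : Type) (le : P -> P -> Prop).
Hypothesis le_refl : forall x, le x x.
Hypothesis le_antisym : forall x y, le x y -> le y x -> x = y.
Hypothesis le_trans : forall x y z, le x y -> le y z -> le x z.

Local Notation "x ≺ y" := (plt P le x y) (at level 70).
Local Notation 𝒳 := (WO P le).
Local Notation sd := (symdiff P).

Lemma plt_not_ge x y : x ≺ y -> le y x -> False.
Proof. intros [Lxy Nxy] Lyx. exact (Nxy (le_antisym x y Lxy Lyx)). Qed.

Lemma plt_trans x y z : x ≺ y -> y ≺ z -> x ≺ z.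
Proof.
  intros [Lxy _] [Lyz Nyz]. split; [eauto |].
  intros ->. exact (Nyz (le_antisym y z Lyz Lxy)).
Qed.

Definition well_founded_on (S : P -> Prop) : Prop :=
  forall A : P -> Prop, (forall a, A a -> S a) -> (exists a, A a) ->
  exists m, A m /\ forall a, A a -> ~ a ≺ m.

Lemma well_founded_on_sub S T :
  (forall y, S y -> T y) -> well_founded_on T -> well_founded_on S.
Proof. intros HST HT A HA. apply HT. auto. Qed.

Lemma well_ordered_wf X : well_ordered P le X -> well_founded_on X.
Proof.
  intros [_ Hleast] A HA Hne.
  destruct (Hleast A HA Hne) as [m [Am Hm]].
  exists m; split; [exact Am |].
  intros a Aa Lam. exact (plt_not_ge a m Lam (Hm a Aa)).
Qed.

Lemma well_founded_on_union S T :
  well_founded_on S -> well_founded_on T -> well_founded_on (fun y => S y \/ T y).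
Proof.
  intros HS HT A HA [a0 Aa0].
  destruct (classic (exists a, A a /\ S a)) as [HAS | HAS].
  2: { destruct (HT A) as [m Hm]; [| exists a0; exact Aa0 | exists m; exact Hm].
       intros a Aa. destruct (HA a Aa) as [Sa | Ta]; [exfalso; eauto | exact Ta]. }
  destruct (HS (fun a => A a /\ S a)) as [m1 [[Am1 _] Hm1]]; [tauto | exact HAS |].
  destruct (classic (exists a, A a /\ a ≺ m1)) as [[a [Aa La]] | Hmin].
  2: { exists m1; split; [exact Am1 |]. intros a Aa La. eauto. }
  (* the elements of [A] below [m1] all lie in [T] *)
  destruct (HT (fun b => A b /\ b ≺ m1)) as [m2 [[Am2 Lm2] Hm2]].
  - intros b [Ab Lb]. destruct (HA b Ab) as [Sb | Tb]; [| exact Tb].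
    exfalso. exact (Hm1 b (conj Ab Sb) Lb).
  - exists a; auto.
  - exists m2; split; [exact Am2 |].
    intros b Ab Lb. exact (Hm2 b (conj Ab (plt_trans b m2 m1 Lb Lm2)) Lb).
Qed.

Lemma well_founded_on_no_descent S D :
  well_founded_on S -> (forall z, D z -> S z) ->
  (forall z, D z -> exists x, D x /\ x ≺ z) -> forall z, ~ D z.
Proof.
  intros HS HDS Hstep z Dz.
  destruct (HS D HDS (ex_intro _ z Dz)) as [m [Dm Hm]].
  destruct (Hstep m Dm) as [x [Dx Lx]].
  exact (Hm x Dx Lx).
Qed.

Lemma well_founded_on_descent S D E :
  well_founded_on S -> (forall z, D z -> S z) ->
  (forall z, D z -> exists x, (D x \/ E x) /\ x ≺ z) ->
  forall z, D z -> exists x, E x /\ x ≺ z.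
Proof.
  intros HS HDS Hstep z Dz. apply NNPP. intro Hz.
  apply (well_founded_on_no_descent S (fun z => D z /\ ~ exists x, E x /\ x ≺ z) HS)
    with z; [firstorder | | tauto].
  intros z' [Dz' Hz'].
  destruct (Hstep z' Dz') as [x [[Dx | Ex] Lx]]; [| exfalso; eauto].
  exists x; split; [split; [exact Dx |] | exact Lx].
  intros [x' [Ex' Lx']]. apply Hz'. exists x'. split; [exact Ex' | eapply plt_trans; eauto].
Qed.

Lemma well_ordered_sub X Y :
  (forall y, X y -> Y y) -> well_ordered P le Y -> well_ordered P le X.
Proof.
  intros HXY [Htot Hleast]. split.
  - intros x y Xx Xy. apply Htot; auto.
  - intros A HA. apply Hleast. auto.
Qed.

Lemma WO_union_wf (X Y : 𝒳) :
  well_founded_on (fun y => proj1_sig X y \/ proj1_sig Y y).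
Proof. apply well_founded_on_union; apply well_ordered_wf, proj2_sig. Qed.

Lemma WO_ext (X Y : 𝒳) : (forall y, proj1_sig X y <-> proj1_sig Y y) -> X = Y.
Proof.
  destruct X as [A HA], Y as [B HB]; simpl. intro HAB.
  assert (A = B) as <-.
  { extensionality y. apply propositional_extensionality. apply HAB. }
  f_equal. apply proof_irrelevance.
Qed.

Lemma WO_eq_of_no_symdiff (X Y : 𝒳) :
  (forall y, ~ sd (proj1_sig X) (proj1_sig Y) y) -> X = Y.
Proof.
  intro H. apply WO_ext. intro y. specialize (H y). unfold symdiff in H.
  destruct (classic (proj1_sig X y)); tauto.
Qed.

Lemma symdiff_irrefl A y : ~ sd A A y.
Proof. unfold symdiff. tauto. Qed.

Lemma symdiff_in_union A B y : sd A B y -> A y \/ B y.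
Proof. unfold symdiff. tauto. Qed.

(** * Fixed points of causal maps *)

Section CausalMap.

Variable f : 𝒳 -> 𝒳.
Hypothesis f_causal : forall X X' y, sd (proj1_sig (f X)) (proj1_sig (f X')) y ->
  exists x, sd (proj1_sig X) (proj1_sig X') x /\ x ≺ y.

Local Notation F X := (proj1_sig (f X)).

Lemma causal_map_agree (A B : 𝒳) y :
  (forall x, x ≺ y -> (proj1_sig A x <-> proj1_sig B x)) -> (F A y <-> F B y).
Proof.
  intro HAB.
  assert (Hy : ~ sd (F A) (F B) y).
  { intro Hs. destruct (f_causal A B y Hs) as [x [Hx Lx]].
    specialize (HAB x Lx). unfold symdiff in Hx. tauto. }
  unfold symdiff in Hy. destruct (classic (F A y)); tauto.
Qed.

Lemma causal_map_fix_unique X Y : f X = X -> f Y = Y -> X = Y.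
Proof.
  intros HX HY. apply WO_eq_of_no_symdiff.
  apply (well_founded_on_no_descent _ _ (WO_union_wf X Y) (symdiff_in_union _ _)).
  intros z Hz. rewrite <- HX, <- HY in Hz. exact (f_causal X Y z Hz).
Qed.

Definition down (A : 𝒳) (y : P) : Prop := exists a, proj1_sig A a /\ le y a.

(* [A] is an initial piece of a fixed point of [f]. *)
Definition fixed_below (A : 𝒳) : Prop :=
  forall y, down A y -> (proj1_sig A y <-> F A y).

Lemma down_self (A : 𝒳) y : proj1_sig A y -> down A y.
Proof. intro Ay. exists y. auto. Qed.

Lemma down_le A x y : le x y -> down A y -> down A x.
Proof. intros Lxy [a [Aa Lya]]. exists a. eauto. Qed.

Lemma fixed_below_agree A B y : fixed_below A -> fixed_below B ->
  down A y -> down B y -> (proj1_sig A y <-> proj1_sig B y).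
Proof.
  intros GA GB.
  assert (H : forall z, ~ (down A z /\ down B z /\ sd (proj1_sig A) (proj1_sig B) z)).
  { apply (well_founded_on_no_descent _ _ (WO_union_wf A B)).
    - intros z (_ & _ & Hz). exact (symdiff_in_union _ _ _ Hz).
    - intros z (DAz & DBz & Hz).
      destruct (f_causal A B z) as [x [Hx Lx]].
      { specialize (GA z DAz). specialize (GB z DBz). unfold symdiff in *. tauto. }
      exists x. split; [| exact Lx].
      split; [| split; [| exact Hx]];
        eapply down_le; [apply Lx | assumption | apply Lx | assumption]. }
  intros DAy DBy. specialize (H y). unfold symdiff in H.
  destruct (classic (proj1_sig A y)); tauto.
Qed.

Lemma fixed_below_subset A B : fixed_below A -> fixed_below B ->
  (forall y, proj1_sig A y -> down B y) -> forall y, proj1_sig A y -> proj1_sig B y.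
Proof.
  intros GA GB HAB y Ay.
  exact (proj1 (fixed_below_agree A B y GA GB (down_self A y Ay) (HAB y Ay)) Ay).
Qed.

Lemma least_outside_down (A B : 𝒳) : ~ (forall y, proj1_sig A y -> down B y) ->
  exists u, (proj1_sig A u /\ ~ down B u) /\
    forall x, proj1_sig A x -> ~ down B x -> le u x.
Proof.
  intro HAB.
  destruct (proj2 (proj2_sig A) (fun x => proj1_sig A x /\ ~ down B x)) as [u [Hu Hleast]].
  - tauto.
  - apply NNPP. intro H. apply HAB. intros y Ay. apply NNPP. eauto.
  - exists u. split; [exact Hu |]. auto.
Qed.

(* Below the least point [u] of [A] outside [down B], the sets [A] and [B] coincide. *)
Lemma fixed_below_least_outside A B u : fixed_below A -> fixed_below B ->
  proj1_sig A u -> ~ down B u -> (forall x, proj1_sig A x -> ~ down B x -> le u x) ->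
  F B u.
Proof.
  intros GA GB Au Du Hu.
  apply (causal_map_agree A B u); [| exact (proj1 (GA u (down_self A u Au)) Au)].
  intros x Lxu.
  assert (DAx : down A x) by (exists u; split; [exact Au | apply Lxu]).
  split; intro Hx.
  - assert (DBx : down B x).
    { apply NNPP. intro DBx. exact (plt_not_ge x u Lxu (Hu x Hx DBx)). }
    exact (proj1 (fixed_below_agree A B x GA GB DAx DBx) Hx).
  - exact (proj2 (fixed_below_agree A B x GA GB DAx (down_self B x Hx)) Hx).
Qed.

Lemma fixed_below_chain A B : fixed_below A -> fixed_below B ->
  (forall y, proj1_sig A y -> proj1_sig B y) \/ (forall y, proj1_sig B y -> proj1_sig A y).
Proof.
  intros GA GB.
  destruct (classic (forall y, proj1_sig A y -> down B y)) as [HA | HA].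
  { left. exact (fixed_below_subset A B GA GB HA). }
  destruct (classic (forall y, proj1_sig B y -> down A y)) as [HB | HB].
  { right. exact (fixed_below_subset B A GB GA HB). }
  exfalso.
  destruct (least_outside_down A B HA) as [u [[Au Du] Hu]].
  destruct (least_outside_down B A HB) as [v [[Bv Dv] _]].
  assert (Fu : F B u) by exact (fixed_below_least_outside A B u GA GB Au Du Hu).
  assert (Fv : F B v) by exact (proj1 (GB v (down_self B v Bv)) Bv).
  destruct (proj1 (proj2_sig (f B)) u v Fu Fv) as [Luv | Lvu].
  - apply Du. exists v. auto.
  - apply Dv. exists u. auto.
Qed.

Definition fixed_union (y : P) : Prop := exists A, fixed_below A /\ proj1_sig A y.

Lemma fixed_union_agree A y : fixed_below A -> down A y ->
  (proj1_sig A y <-> fixed_union y).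
Proof.
  intros GA DAy. split; [intro Ay; exists A; auto |].
  intros [B [GB By]].
  exact (proj2 (fixed_below_agree A B y GA GB DAy (down_self B y By)) By).
Qed.

Lemma fixed_union_total u v : fixed_union u -> fixed_union v -> le u v \/ le v u.
Proof.
  intros [A [GA Au]] [B [GB Bv]].
  destruct (fixed_below_chain A B GA GB) as [HAB | HBA].
  - apply (proj1 (proj2_sig B)); auto.
  - apply (proj1 (proj2_sig A)); auto.
Qed.

Lemma fixed_union_well_ordered : well_ordered P le fixed_union.
Proof.
  split; [exact fixed_union_total |].
  intros C HC [c Cc].
  destruct (HC c Cc) as [A [GA Ac]].
  destruct (proj2 (proj2_sig A) (fun x => C x /\ proj1_sig A x)) as [m [[Cm Am] Hm]];
    [tauto | eauto |].
  exists m. split; [exact Cm |].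
  intros c' Cc'.
  destruct (fixed_union_total m c' (HC m Cm) (HC c' Cc')) as [Lmc | Lcm]; [exact Lmc |].
  apply Hm. split; [exact Cc' |].
  apply (fixed_union_agree A c' GA); [exists m; auto | exact (HC c' Cc')].
Qed.

Definition fixed_union_WO : 𝒳 := exist _ fixed_union fixed_union_well_ordered.

Lemma fixed_below_union : fixed_below fixed_union_WO.
Proof.
  intros y [a [[A [GA Aa]] Lya]]. simpl.
  assert (DAy : down A y) by (exists a; auto).
  transitivity (proj1_sig A y); [symmetry; exact (fixed_union_agree A y GA DAy) |].
  transitivity (F A y); [exact (GA y DAy) |].
  apply causal_map_agree. intros x Lxy. simpl.
  apply fixed_union_agree; [exact GA | exact (down_le A x y (proj1 Lxy) DAy)].
Qed.

(* Otherwise the least new point [m] could be added: [fixed_union ∪ {m}] is [fixed_below]. *)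
Lemma fixed_union_closed y : F fixed_union_WO y -> down fixed_union_WO y.
Proof.
  set (U := fixed_union_WO).
  apply NNPP. intro Hy.
  destruct (proj2 (proj2_sig (f U)) (fun y => F U y /\ ~ down U y))
    as [m [[Fm Dm] Hm]]; [tauto | exists y; tauto |].
  set (U' := fun x => fixed_union x \/ x = m).
  assert (WU' : well_ordered P le U').
  { apply (well_ordered_sub U' (F U)); [| exact (proj2_sig (f U))].
    intros x [Ux | ->]; [exact (proj1 (fixed_below_union x (down_self U x Ux)) Ux) | exact Fm]. }
  set (U'w := exist _ U' WU' : 𝒳).
  assert (GU' : fixed_below U'w).
  { intros x DU'x. change (U' x <-> F U'w x).
    assert (Hmx : ~ m ≺ x).
    { intro Lmx. destruct DU'x as [a [[Ua | ->] Lxa]].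
      - apply Dm. exists a. split; [exact Ua | eapply le_trans; [apply Lmx | exact Lxa]].
      - exact (plt_not_ge m x Lmx Lxa). }
    transitivity (F U x).
    2: { apply causal_map_agree. intros z Lzx. change (fixed_union z <-> U' z). unfold U'.
         split; [left; assumption | intros [Uz | ->]; [exact Uz | contradiction]]. }
    destruct (classic (down U x)) as [DUx | DUx].
    - transitivity (fixed_union x); [| exact (fixed_below_union x DUx)].
      unfold U'. split; [intros [Ux | ->]; [exact Ux | contradiction] | left; assumption].
    - unfold U'. split.
      + intros [Ux | ->]; [exfalso; exact (DUx (down_self U x Ux)) | exact Fm].
      + intro Fx. right. apply le_antisym; [| exact (Hm x (conj Fx DUx))].
        destruct DU'x as [a [[Ua | ->] Lxa]]; [exfalso; apply DUx; exists a; auto | exact Lxa]. }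
  apply Dm, down_self. exists U'w. split; [exact GU' | right; reflexivity].
Qed.

Theorem causal_map_fixpoint : exists X, f X = X.
Proof.
  exists fixed_union_WO. apply WO_ext. intro y. split; intro Hy.
  - exact (proj2 (fixed_below_union y (fixed_union_closed y Hy)) Hy).
  - exact (proj1 (fixed_below_union y (down_self _ y Hy)) Hy).
Qed.

End CausalMap.

(** * Label-indexed families *)

Variable L : Type.
Local Notation sys := (system P le L).

Definition same_values {Q R : L -> Prop} (X : sig Q -> 𝒳) (Y : sig R -> 𝒳) : Prop :=
  forall l p q, X (exist Q l p) = Y (exist R l q).

Lemma value_pi {Q : L -> Prop} {T : Type} (X : {l | Q l} -> T) l p q :
  X (exist _ l p) = X (exist _ l q).
Proof. rewrite (proof_irrelevance _ p q). reflexivity. Qed.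

Lemma sfun_congr (s : sys) X Y o p q :
  same_values X Y -> sfun s X (exist _ o p) = sfun s Y (exist _ o q).
Proof.
  intro HXY. assert (X = Y) as <-.
  { extensionality l. destruct l as [l h]. apply HXY. }
  apply value_pi.
Qed.

(* The explicit predicates keep [exist (sO s) o h] free of eta-expansion, so that
   [rewrite] with lemmas such as [par_sfun_l] finds it in the goals produced here. *)
Lemma system_ext (s t : sys) :
  (forall l, sI s l <-> sI t l) -> (forall l, sO s l <-> sO t l) ->
  (forall X Y, @same_values (sI s) (sI t) X Y ->
     @same_values (sO s) (sO t) (sfun s X) (sfun t Y)) ->
  s = t.
Proof.
  destruct s as [I O F], t as [I' O' F']; simpl. intros HI HO HF.
  assert (I = I') as <- by (extensionality l; apply propositional_extensionality, HI).
  assert (O = O') as <- by (extensionality l; apply propositional_extensionality, HO).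
  f_equal. extensionality X. extensionality o. destruct o as [o h].
  apply HF. intros l p q. apply value_pi.
Qed.

Lemma extend_at (I : L -> Prop) i X Xi h : extend P le L I i X Xi (exist _ i h) = Xi.
Proof.
  unfold extend; simpl.
  destruct (excluded_middle_informative (i = i)); [reflexivity | contradiction].
Qed.

Lemma extend_other (I : L -> Prop) i X Xi l h (p : I l /\ l <> i) :
  extend P le L I i X Xi (exist _ l h) = X (exist _ l p).
Proof.
  unfold extend; simpl.
  destruct (excluded_middle_informative (l = i)); [destruct p; contradiction | apply value_pi].
Qed.

Lemma extend_same_values (Q R : L -> Prop) i X Y Xi :
  same_values X Y -> same_values (extend P le L Q i X Xi) (extend P le L R i Y Xi).
Proof.
  intros HXY l p q. unfold extend; simpl.
  destruct (excluded_middle_informative (l = i)); [reflexivity | apply HXY].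
Qed.

Lemma finite_set_sub (I J : L -> Prop) :
  (forall l, I l -> J l) -> finite_set L J -> finite_set L I.
Proof. intros HIJ [ls Hls]. exists ls. auto. Qed.

Lemma finite_set_union (I J : L -> Prop) :
  finite_set L I -> finite_set L J -> finite_set L (fun l => I l \/ J l).
Proof.
  intros [ls Hls] [ms Hms]. exists (ls ++ ms).
  intros l [h | h]; apply in_or_app; auto.
Qed.

Lemma causal_symdiff (s : sys) : causal s ->
  forall (X X' : {l | sI s l} -> 𝒳) o y,
    sd (proj1_sig (sfun s X o)) (proj1_sig (sfun s X' o)) y ->
    exists i x, sd (proj1_sig (X i)) (proj1_sig (X' i)) x /\ x ≺ y.
Proof. intros (_ & _ & _ & H). exact H. Qed.

Lemma causal_extend (s : sys) i X X' Xi Xi' o y : causal s ->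
  sd (proj1_sig (sfun s (extend P le L (sI s) i X Xi) o))
     (proj1_sig (sfun s (extend P le L (sI s) i X' Xi') o)) y ->
  exists x, (sd (proj1_sig Xi) (proj1_sig Xi') x \/
             exists l, sd (proj1_sig (X l)) (proj1_sig (X' l)) x) /\ x ≺ y.
Proof.
  intros Hs Hy.
  destruct (causal_symdiff s Hs _ _ _ _ Hy) as ([l hl] & x & Hx & Lxy).
  exists x. split; [| exact Lxy].
  destruct (classic (l = i)) as [-> | n].
  - left. rewrite !extend_at in Hx. exact Hx.
  - right. exists (exist _ l (conj hl n)).
    rewrite !(extend_other _ _ _ _ _ _ (conj hl n)) in Hx. exact Hx.
Qed.

(** * Interface connection *)

Section Feedback.

Variables (s : sys) (i o : L).
Hypothesis s_causal : causal s.
Hypothesis ho : sO s o.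
Variable X : {l | sI s l /\ l <> i} -> 𝒳.

Definition feedback (Xi : 𝒳) : 𝒳 := sfun s (extend P le L (sI s) i X Xi) (exist _ o ho).

Lemma feedback_causal : forall Y Y' y,
  sd (proj1_sig (feedback Y)) (proj1_sig (feedback Y')) y ->
  exists x, sd (proj1_sig Y) (proj1_sig Y') x /\ x ≺ y.
Proof.
  intros Y Y' y Hy.
  destruct (causal_extend s i X X Y Y' _ y s_causal Hy) as (x & [Hx | [l Hl]] & Lxy).
  - exists x. auto.
  - exfalso. exact (symdiff_irrefl _ _ Hl).
Qed.

Lemma is_fix_feedback Xi : is_fix s i o X Xi <-> feedback Xi = Xi.
Proof.
  split; [intro H; apply H |].
  intros H h. rewrite <- H at 2. apply value_pi.
Qed.

Lemma is_fix_unique_exists : exists! Xi, is_fix s i o X Xi.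
Proof.
  destruct (causal_map_fixpoint feedback feedback_causal) as [Xi HXi].
  exists Xi. split; [apply is_fix_feedback, HXi |].
  intros Y HY. apply (causal_map_fix_unique feedback feedback_causal).
  - exact HXi.
  - apply is_fix_feedback, HY.
Qed.

Lemma Xstar_is_fix : is_fix s i o X (Xstar s i o X).
Proof.
  unfold Xstar. apply epsilon_spec.
  destruct is_fix_unique_exists as [Xi [HXi _]]. exists Xi. exact HXi.
Qed.

Lemma Xstar_eq Xi : is_fix s i o X Xi -> Xstar s i o X = Xi.
Proof.
  intro HXi. destruct is_fix_unique_exists as [Y [_ HY]].
  transitivity Y; [symmetry |]; apply HY; [apply Xstar_is_fix | exact HXi].
Qed.

End Feedback.

Lemma conn_sfun (s : sys) i o X o' :
  sfun (conn s i o) X o' =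
  sfun s (extend P le L (sI s) i X (Xstar s i o X))
    (exist _ (proj1_sig o') (proj1 (proj2_sig o'))).
Proof. reflexivity. Qed.

Lemma Xstar_symdiff (s : sys) i o X X' x : causal s -> sO s o ->
  sd (proj1_sig (Xstar s i o X)) (proj1_sig (Xstar s i o X')) x ->
  exists l x', sd (proj1_sig (X l)) (proj1_sig (X' l)) x' /\ x' ≺ x.
Proof.
  intros Hs ho Hx.
  destruct (well_founded_on_descent _ _
              (fun y => exists l, sd (proj1_sig (X l)) (proj1_sig (X' l)) y)
              (WO_union_wf (Xstar s i o X) (Xstar s i o X')) (symdiff_in_union _ _))
    with x as (x' & [l Hl] & Lx'x); [| exact Hx | exists l, x'; auto].
  intros z Hz.
  rewrite <- (Xstar_is_fix s i o Hs ho X ho), <- (Xstar_is_fix s i o Hs ho X' ho) in Hz.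
  exact (causal_extend s i X X' _ _ _ z Hs Hz).
Qed.

Lemma conn_causal (s : sys) i o : causal s -> sO s o -> causal (conn s i o).
Proof.
  intros Hs ho. pose proof Hs as (HfI & HfO & Hdisj & _).
  split; [| split; [| split]].
  - exact (finite_set_sub _ _ (fun l h => proj1 h) HfI).
  - exact (finite_set_sub _ _ (fun l h => proj1 h) HfO).
  - intros l [h _] [h' _]. exact (Hdisj l h h').
  - intros X X' o' y Hy. rewrite !conn_sfun in Hy.
    destruct (causal_extend s i X X' _ _ _ y Hs Hy) as (x & [Hx | [l Hl]] & Lxy).
    + destruct (Xstar_symdiff s i o X X' x Hs ho Hx) as (l & x' & Hl & Lx'x).
      exists l, x'. split; [exact Hl | exact (plt_trans x' x y Lx'x Lxy)].
    + exists l, x. auto.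
Qed.

Lemma joint_fix_unique (s : sys) (E1 E2 : {l | sI s l} -> 𝒳) : causal s ->
  well_founded_on (fun y => exists l, sd (proj1_sig (E1 l)) (proj1_sig (E2 l)) y) ->
  (forall l, E1 l = E2 l \/ exists o, sfun s E1 o = E1 l /\ sfun s E2 o = E2 l) ->
  E1 = E2.
Proof.
  intros Hs HW Hwires.
  assert (Hnone : forall y, ~ exists l, sd (proj1_sig (E1 l)) (proj1_sig (E2 l)) y).
  { apply (well_founded_on_no_descent _ _ HW (fun y Hy => Hy)).
    intros z [l Hz].
    destruct (Hwires l) as [Heq | [o [H1 H2]]].
    - rewrite Heq in Hz. exfalso. exact (symdiff_irrefl _ _ Hz).
    - rewrite <- H1, <- H2 in Hz.
      destruct (causal_symdiff s Hs _ _ _ _ Hz) as (l' & x & Hx & Lxz).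
      exists x. split; [exists l'; exact Hx | exact Lxz]. }
  extensionality l. apply WO_eq_of_no_symdiff.
  intros y Hy. exact (Hnone y (ex_intro _ l Hy)).
Qed.

Section TwoConnections.

Variables (s : sys) (i o i' o' : L).
Hypothesis s_causal : causal s.
Hypotheses (hi : sI s i) (ho : sO s o) (hi' : sI s i') (ho' : sO s o').
Hypotheses (ni : i' <> i) (no : o' <> o).
Variable X : {l | (sI s l /\ l <> i) /\ l <> i'} -> 𝒳.

Definition conn2_inner : {l | sI s l /\ l <> i} -> 𝒳 :=
  extend P le L (sI (conn s i o)) i' X (Xstar (conn s i o) i' o' X).

Definition conn2_input : {l | sI s l} -> 𝒳 :=
  extend P le L (sI s) i conn2_inner (Xstar s i o conn2_inner).

Lemma conn_conn_sfun o'' (h : sO (conn (conn s i o) i' o') o'') :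
  sfun (conn (conn s i o) i' o') X (exist _ o'' h) =
  sfun s conn2_input (exist _ o'' (proj1 (proj1 h))).
Proof. reflexivity. Qed.

Lemma conn2_input_fix : sfun s conn2_input (exist _ o ho) = conn2_input (exist _ i hi).
Proof. unfold conn2_input. rewrite extend_at. apply Xstar_is_fix; assumption. Qed.

Lemma conn2_input_fix' : sfun s conn2_input (exist _ o' ho') = conn2_input (exist _ i' hi').
Proof.
  unfold conn2_input. rewrite (extend_other _ _ _ _ _ _ (conj hi' ni)).
  unfold conn2_inner. rewrite extend_at.
  pose proof (Xstar_is_fix (conn s i o) i' o' (conn_causal s i o s_causal ho) (conj ho' no) X
                (conj ho' no)) as Hfix.
  rewrite conn_sfun in Hfix. etransitivity; [| exact Hfix]. apply value_pi.
Qed.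

Lemma conn2_input_other l h (p : (sI s l /\ l <> i) /\ l <> i') :
  conn2_input (exist _ l h) = X (exist _ l p).
Proof.
  unfold conn2_input. rewrite (extend_other _ _ _ _ _ _ (proj1 p)).
  unfold conn2_inner. apply extend_other.
Qed.

End TwoConnections.

Lemma two_wire_fix_unique (s : sys) i o i' o' (E1 E2 : {l | sI s l} -> 𝒳)
    (hi : sI s i) (ho : sO s o) (hi' : sI s i') (ho' : sO s o') : causal s ->
  (forall l h, l <> i -> l <> i' -> E1 (exist _ l h) = E2 (exist _ l h)) ->
  sfun s E1 (exist _ o ho) = E1 (exist _ i hi) -> sfun s E2 (exist _ o ho) = E2 (exist _ i hi) ->
  sfun s E1 (exist _ o' ho') = E1 (exist _ i' hi') ->
  sfun s E2 (exist _ o' ho') = E2 (exist _ i' hi') ->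
  E1 = E2.
Proof.
  intros Hs Hother H1 H2 H1' H2'.
  apply joint_fix_unique; [exact Hs | |].
  - apply (well_founded_on_sub _ (fun y =>
      (proj1_sig (E1 (exist _ i hi)) y \/ proj1_sig (E2 (exist _ i hi)) y) \/
      (proj1_sig (E1 (exist _ i' hi')) y \/ proj1_sig (E2 (exist _ i' hi')) y)));
      [| apply well_founded_on_union; apply WO_union_wf].
    intros y [[l h] Hy].
    destruct (classic (l = i)) as [-> | n].
    { rewrite (value_pi E1 _ h hi), (value_pi E2 _ h hi) in Hy.
      left. exact (symdiff_in_union _ _ _ Hy). }
    destruct (classic (l = i')) as [-> | n'].
    { rewrite (value_pi E1 _ h hi'), (value_pi E2 _ h hi') in Hy.
      right. exact (symdiff_in_union _ _ _ Hy). }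
    rewrite (Hother l h n n') in Hy. exfalso. exact (symdiff_irrefl _ _ Hy).
  - intros [l h].
    destruct (classic (l = i)) as [-> | n].
    { right. exists (exist _ o ho). rewrite (value_pi E1 _ h hi), (value_pi E2 _ h hi). auto. }
    destruct (classic (l = i')) as [-> | n'].
    { right. exists (exist _ o' ho'). rewrite (value_pi E1 _ h hi'), (value_pi E2 _ h hi'). auto. }
    left. exact (Hother l h n n').
Qed.

Lemma conn_comm (s : sys) i o i' o' : causal s ->
  sI s i -> sO s o -> sI s i' -> sO s o' -> i' <> i -> o' <> o ->
  conn (conn s i o) i' o' = conn (conn s i' o') i o.
Proof.
  intros Hs hi ho hi' ho' ni no.
  apply system_ext; [intro l; simpl; tauto | intro l; simpl; tauto |].
  intros X Y HXY o'' p q.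
  rewrite (conn_conn_sfun s i o i' o'), (conn_conn_sfun s i' o' i o).
  replace (conn2_input s i' o' i o Y) with (conn2_input s i o i' o' X); [apply value_pi |].
  apply (two_wire_fix_unique s i o i' o' _ _ hi ho hi' ho' Hs).
  - intros l h n n'.
    rewrite (conn2_input_other s i o i' o' X l h (conj (conj h n) n')),
            (conn2_input_other s i' o' i o Y l h (conj (conj h n') n)).
    apply HXY.
  - apply conn2_input_fix; assumption.
  - apply conn2_input_fix'; auto.
  - apply conn2_input_fix'; assumption.
  - apply conn2_input_fix; auto.
Qed.

(** * Parallel composition *)

Lemma par_sfun_l (s1 s2 : sys) X o (h : sO (par s1 s2) o) (h1 : sO s1 o) :
  sfun (par s1 s2) X (exist _ o h) =
  sfun s1 (fun l => X (exist _ (proj1_sig l) (or_introl (proj2_sig l)))) (exist _ o h1).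
Proof.
  unfold par; simpl.
  destruct (excluded_middle_informative (sO s1 o)); [apply value_pi | contradiction].
Qed.

Lemma par_sfun_r (s1 s2 : sys) X o (h : sO (par s1 s2) o) (h2 : sO s2 o) : ~ sO s1 o ->
  sfun (par s1 s2) X (exist _ o h) =
  sfun s2 (fun l => X (exist _ (proj1_sig l) (or_intror (proj2_sig l)))) (exist _ o h2).
Proof.
  intro n1. unfold par; simpl.
  destruct (excluded_middle_informative (sO s1 o)); [contradiction | apply value_pi].
Qed.

Lemma par_causal (s1 s2 : sys) :
  causal s1 -> causal s2 -> lab_disjoint s1 s2 -> causal (par s1 s2).
Proof.
  intros Hs1 Hs2 Hd.
  pose proof Hs1 as (HfI1 & HfO1 & Hdisj1 & _). pose proof Hs2 as (HfI2 & HfO2 & Hdisj2 & _).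
  split; [| split; [| split]].
  - exact (finite_set_union _ _ HfI1 HfI2).
  - exact (finite_set_union _ _ HfO1 HfO2).
  - unfold lab_disjoint, lab in Hd. intros l [h | h] [h' | h']; eauto.
  - intros X X' [o h] y.
    destruct (classic (sO s1 o)) as [h1 | n1].
    + rewrite !(par_sfun_l s1 s2 _ o h h1). intro Hy.
      destruct (causal_symdiff s1 Hs1 _ _ _ _ Hy) as ([l hl] & x & Hx & Lxy).
      exists (exist _ l (or_introl hl)), x. auto.
    + assert (h2 : sO s2 o) by (destruct h; [contradiction | assumption]).
      rewrite !(par_sfun_r s1 s2 _ o h h2 n1). intro Hy.
      destruct (causal_symdiff s2 Hs2 _ _ _ _ Hy) as ([l hl] & x & Hx & Lxy).
      exists (exist _ l (or_intror hl)), x. auto.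
Qed.

Lemma par_InGamma (s1 s2 : sys) : lab_disjoint s1 s2 -> forall a b : L,
  (lab s1 a -> lab s1 b -> (InGamma (par s1 s2) a b <-> InGamma s1 a b)) /\
  (lab s2 a -> lab s2 b -> (InGamma (par s1 s2) a b <-> InGamma s2 a b)).
Proof.
  intros Hd a b. pose proof (Hd a) as Ha. pose proof (Hd b) as Hb.
  unfold InGamma, lab in *; simpl. split; intros; tauto.
Qed.

Lemma par_comm (s1 s2 : sys) : lab_disjoint s1 s2 -> par s1 s2 = par s2 s1.
Proof.
  intro Hd.
  apply system_ext; [intro l; simpl; tauto | intro l; simpl; tauto |].
  intros X Y HXY o p q.
  destruct (classic (sO s1 o)) as [h1 | n1].
  - assert (n2 : ~ sO s2 o) by (intro h2; exact (Hd o (or_intror h1) (or_intror h2))).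
    rewrite (par_sfun_l s1 s2 X o p h1), (par_sfun_r s2 s1 Y o q h1 n2).
    apply sfun_congr. intros l p' q'. apply HXY.
  - assert (h2 : sO s2 o) by (destruct p; [contradiction | assumption]).
    rewrite (par_sfun_r s1 s2 X o p h2 n1), (par_sfun_l s2 s1 Y o q h2).
    apply sfun_congr. intros l p' q'. apply HXY.
Qed.

Lemma par_assoc (s1 s2 s3 : sys) :
  lab_disjoint s1 s2 -> lab_disjoint s1 s3 -> lab_disjoint s2 s3 ->
  par (par s1 s2) s3 = par s1 (par s2 s3).
Proof.
  intros H12 H13 H23.
  apply system_ext; [intro l; simpl; tauto | intro l; simpl; tauto |].
  intros X Y HXY o p q.
  destruct (classic (sO s1 o)) as [h1 | n1].
  - rewrite (par_sfun_l (par s1 s2) s3 X o p (or_introl h1)),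
            (par_sfun_l s1 s2 _ o _ h1), (par_sfun_l s1 (par s2 s3) Y o q h1).
    apply sfun_congr. intros l p' q'. apply HXY.
  - destruct (classic (sO s2 o)) as [h2 | n2].
    + rewrite (par_sfun_l (par s1 s2) s3 X o p (or_intror h2)),
              (par_sfun_r s1 s2 _ o _ h2 n1), (par_sfun_r s1 (par s2 s3) Y o q (or_introl h2) n1),
              (par_sfun_l s2 s3 _ o _ h2).
      apply sfun_congr. intros l p' q'. apply HXY.
    + assert (h3 : sO s3 o) by (destruct p as [[|]|]; [contradiction | contradiction | assumption]).
      assert (n12 : ~ sO (par s1 s2) o) by (intros [|]; contradiction).
      rewrite (par_sfun_r (par s1 s2) s3 X o p h3 n12),
              (par_sfun_r s1 (par s2 s3) Y o q (or_intror h3) n1), (par_sfun_r s2 s3 _ o _ h3 n2).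
      apply sfun_congr. intros l p' q'. apply HXY.
Qed.

Lemma Xstar_par (s1 s2 : sys) i o (Z : {l | sI s1 l /\ l <> i} -> 𝒳)
    (Y : {l | sI (par s1 s2) l /\ l <> i} -> 𝒳) :
  causal s1 -> causal s2 -> lab_disjoint s1 s2 -> sO s1 o -> same_values Z Y ->
  Xstar s1 i o Z = Xstar (par s1 s2) i o Y.
Proof.
  intros Hs1 Hs2 Hd ho HZY. apply Xstar_eq; [exact Hs1 | exact ho |]. intro h.
  pose proof (Xstar_is_fix (par s1 s2) i o (par_causal s1 s2 Hs1 Hs2 Hd) (or_introl ho) Y
                (or_introl h)) as Hfix.
  rewrite (par_sfun_l s1 s2 _ o _ h) in Hfix.
  etransitivity; [| exact Hfix].
  apply sfun_congr. intros l p q. apply extend_same_values, HZY.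
Qed.

Lemma par_conn (s1 s2 : sys) i o : causal s1 -> causal s2 -> lab_disjoint s1 s2 ->
  sI s1 i -> sO s1 o -> par (conn s1 i o) s2 = conn (par s1 s2) i o.
Proof.
  intros Hs1 Hs2 Hd hi ho.
  pose proof (Hd i (or_introl hi)) as Ni. pose proof (Hd o (or_intror ho)) as No.
  unfold lab in Ni, No.
  apply system_ext.
  - intro l; simpl. destruct (classic (l = i)) as [-> |]; tauto.
  - intro l; simpl. destruct (classic (l = o)) as [-> |]; tauto.
  - intros X Y HXY o'' p q. rewrite conn_sfun.
    destruct (classic (sO s1 o'')) as [h1 | n1].
    + rewrite (par_sfun_l (conn s1 i o) s2 X o'' p (conj h1 (proj2 q))), conn_sfun,
              (par_sfun_l s1 s2 _ o'' _ h1).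
      apply sfun_congr. intros l p' q'. simpl.
      erewrite Xstar_par by (eassumption || (intros l' p'' q''; apply HXY)).
      apply extend_same_values. intros l' p'' q''. apply HXY.
    + assert (h2 : sO s2 o'') by (destruct p as [[] |]; [contradiction | assumption]).
      rewrite (par_sfun_r (conn s1 i o) s2 X o'' p h2 (fun h => n1 (proj1 h))),
              (par_sfun_r s1 s2 _ o'' _ h2 n1).
      apply sfun_congr. intros l p' q'. simpl.
      assert (n : l <> i) by (intros ->; tauto).
      rewrite (extend_other _ _ _ _ _ _ (conj (or_intror q') n)). apply HXY.
Qed.


(** * Composition-order invariance *)

Definition same_pair (a b i o : L) : Prop := (a = i /\ b = o) \/ (a = o /\ b = i).

Lemma InGamma_orient (s : sys) a b :
  InGamma s a b -> exists i o, sI s i /\ sO s o /\ same_pair a b i o.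
Proof.
  intros [[ha hb] | [hb ha]]; [exists a, b | exists b, a]; unfold same_pair; auto.
Qed.

Lemma InGamma_same_pair (s : sys) a b i o :
  same_pair a b i o -> (InGamma s a b <-> InGamma s i o).
Proof. intros [[-> ->] | [-> ->]]; unfold InGamma; tauto. Qed.

Lemma gamma_same_pair (s : sys) a b i o : causal s -> same_pair a b i o ->
  sI s i -> sO s o -> gamma s a b = conn s i o.
Proof.
  intros (_ & _ & Hdisj & _) [[-> ->] | [-> ->]] hi ho; unfold gamma;
    destruct excluded_middle_informative as [h | n]; eauto; exfalso; eauto.
Qed.

Lemma gamma_causal (s : sys) a b : causal s -> InGamma s a b -> causal (gamma s a b).
Proof.
  intros Hs Hab. destruct (InGamma_orient s a b Hab) as (i & o & hi & ho & Hp).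
  rewrite (gamma_same_pair s a b i o Hs Hp hi ho). exact (conn_causal s i o Hs ho).
Qed.

Lemma gamma_comm (s : sys) a b a' b' : causal s -> InGamma s a b ->
  InGamma (gamma s a b) a' b' ->
  InGamma s a' b' /\ InGamma (gamma s a' b') a b /\
  gamma (gamma s a b) a' b' = gamma (gamma s a' b') a b.
Proof.
  intros Hs Hab.
  destruct (InGamma_orient s a b Hab) as (i & o & hi & ho & Hp).
  rewrite (gamma_same_pair s a b i o Hs Hp hi ho). intro Hab'.
  destruct (InGamma_orient _ a' b' Hab') as (i' & o' & [hi' ni] & [ho' no] & Hp').
  rewrite (gamma_same_pair s a' b' i' o' Hs Hp' hi' ho'),
    (gamma_same_pair _ a' b' i' o' (conn_causal s i o Hs ho) Hp' (conj hi' ni) (conj ho' no)),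
    (gamma_same_pair _ a b i o (conn_causal s i' o' Hs ho') Hp
       (conj hi (not_eq_sym ni)) (conj ho (not_eq_sym no))),
    (InGamma_same_pair _ _ _ _ _ Hp'), (InGamma_same_pair _ _ _ _ _ Hp).
  split; [left; auto | split; [left; simpl; auto |]].
  apply conn_comm; auto.
Qed.

Lemma par_gamma (s1 s2 : sys) a b : causal s1 -> causal s2 -> lab_disjoint s1 s2 ->
  InGamma s1 a b -> par (gamma s1 a b) s2 = gamma (par s1 s2) a b.
Proof.
  intros Hs1 Hs2 Hd Hab.
  destruct (InGamma_orient s1 a b Hab) as (i & o & hi & ho & Hp).
  rewrite (gamma_same_pair s1 a b i o Hs1 Hp hi ho),
    (gamma_same_pair (par s1 s2) a b i o (par_causal s1 s2 Hs1 Hs2 Hd) Hp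
       (or_introl hi) (or_introl ho)).
  exact (par_conn s1 s2 i o Hs1 Hs2 Hd hi ho).
Qed.

End CausalSystemAlgebra.

Theorem theorem6p6 :
  forall (P : Type) (le : P -> P -> Prop),
  (forall x, le x x) ->
  (forall x y, le x y -> le y x -> x = y) ->
  (forall x y z, le x y -> le y z -> le x z) ->
  forall (L : Type),
  (* interface connection is well defined: unique solution X* *)
  (forall (s : system P le L) (i o : L), causal s -> sI s i -> sO s o ->
     forall X : { l | sI s l /\ l <> i } -> WO P le,
       exists! Xi : WO P le, is_fix s i o X Xi) /\
  (* closure under parallel composition *)
  (forall s1 s2 : system P le L, causal s1 -> causal s2 ->
     lab_disjoint s1 s2 -> causal (par s1 s2)) /\
  (* closure under interface connection *)
  (forall (s : system P le L) (a b : L), causal s -> InGamma s a b ->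
     causal (gamma s a b)) /\
  (* functional: Γ of a parallel composition *)
  (forall s1 s2 : system P le L, causal s1 -> causal s2 -> lab_disjoint s1 s2 ->
     forall a b : L,
       (lab s1 a -> lab s1 b -> (InGamma (par s1 s2) a b <-> InGamma s1 a b)) /\
       (lab s2 a -> lab s2 b -> (InGamma (par s1 s2) a b <-> InGamma s2 a b))) /\
  (* composition-order invariance (i) *)
  (forall (s : system P le L) (a b a' b' : L), causal s -> InGamma s a b ->
     InGamma (gamma s a b) a' b' ->
     InGamma s a' b' /\ InGamma (gamma s a' b') a b /\
     gamma (gamma s a b) a' b' = gamma (gamma s a' b') a b) /\
  (* composition-order invariance (ii) *)
  (forall s1 s2 s3 : system P le L, causal s1 -> causal s2 -> causal s3 ->
     lab_disjoint s1 s2 -> lab_disjoint s1 s3 -> lab_disjoint s2 s3 ->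
     par (par s1 s2) s3 = par s1 (par s2 s3)) /\
  (forall s1 s2 : system P le L, causal s1 -> causal s2 -> lab_disjoint s1 s2 ->
     par s1 s2 = par s2 s1) /\
  (* composition-order invariance (iii) *)
  (forall (s1 s2 : system P le L) (a b : L), causal s1 -> causal s2 ->
     lab_disjoint s1 s2 -> InGamma s1 a b ->
     par (gamma s1 a b) s2 = gamma (par s1 s2) a b).
Proof.
  intros P le le_refl le_antisym le_trans L.
  split; [| split; [| split; [| split; [| split; [| split; [| split]]]]]].
  - intros s i o Hs _ ho X. eapply is_fix_unique_exists; eauto.
  - intros s1 s2. eapply par_causal; eauto.
  - intros s a b. eapply gamma_causal; eauto.
  - intros s1 s2 _ _. apply par_InGamma.
  - intros s a b a' b'. eapply gamma_comm; eauto.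
  - intros s1 s2 s3 _ _ _. apply par_assoc.
  - intros s1 s2 _ _. apply par_comm.
  - intros s1 s2 a b. eapply par_gamma; eauto.
Qed.
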